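(* Let $r, d, m_1, \ldots, m_r$ be positive integers such that $r \geq 4$ and $m_1 + \ldots + m_r = d$. For each $1 \leq i \leq d-1$ define the integer $\lambda(i)$ by $$\overline{i m_1} + \ldots + \overline{i m_r} = \lambda(i)\, d,$$ where for an integer $z$, $\overline{z}\in\{0,\dots,d-1\}$ denotes the remainder of $z$ modulo $d$. Then $$\#\{ i \in \{1,\dots,d-1\} : \lambda(i) = 1 \} < \frac{d-1}{2}.$$ *)

From mathcomp Require Import all_boot.
Set Implicit Arguments. Unset Strict Implicit. Unset Printing Implicit Defensive.

(* lambda d m i : the integer lambda(i) with
   \sum_j (i * m_j mod d) = lambda(i) * d.  Since \sum_j m_j = d, the sum is
   divisible by d, so lambda(i) is the exact quotient. *)
Definition lambda (r : nat) (d : nat) (m : 'I_r -> nat) (i : nat) : nat :=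
  (\sum_(j < r) ((i * m j) %% d)) %/ d.

Definition count_lambda1 (r d : nat) (m : 'I_r -> nat) : nat :=
  #|[set i : 'I_d | (0 < i) && (lambda d m i == 1)]|.

From mathcomp Require Import all_boot.
From mathcomp Require Import zify.

Set Implicit Arguments.
Unset Strict Implicit.
Unset Printing Implicit Defensive.

(* For every j, [i m_j mod d], [(d-1-i) m_j mod d] and [m_j] add up to a
   positive multiple of [d], since [i m_j + (d-1-i) m_j + m_j = d m_j].
   Summing over j gives [lambda(i) + lambda(d-1-i) >= r - 1 >= 3], so [i] and
   [d-1-i] never both have [lambda = 1]; moreover [lambda(0) = 0] forces
   [lambda(d-1) >= 3].  Hence [i |-> d-1-i] maps the set of [i] with
   [lambda(i) = 1] injectively into its own complement inside
   [{1, ..., d-2}], so twice its size is at most [d - 2]. *)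

Lemma dvdn_leq_modnDD (d a b c : nat) :
  0 < c -> d %| a + b + c -> d <= a %% d + b %% d + c.
Proof.
move=> c_gt0 dvd_abc; apply: dvdn_leq; first by rewrite addn_gt0 c_gt0 orbT.
by rewrite /dvdn -modnDml modnDm modnDml.
Qed.

Section Lambda.

Variables (r d : nat) (m : 'I_r -> nat).
Hypothesis sum_m : \sum_(j < r) m j = d.

Lemma sum_modn_mulE (i : nat) :
  \sum_(j < r) ((i * m j) %% d) = lambda d m i * d.
Proof.
by rewrite /lambda divnK // /dvdn modn_summ -big_distrr /= sum_m modnMl.
Qed.

Lemma lambda0 : lambda d m 0 = 0.
Proof. by rewrite /lambda big1 ?div0n // => j _; rewrite mul0n mod0n. Qed.

Lemma lambdaD_rev_ge (i : nat) :
  (forall j, 0 < m j) -> i < d ->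
  r.-1 <= lambda d m i + lambda d m (d - i.+1).
Proof.
move=> m_gt0 lt_i_d.
have mulD_rev x : i * x + (d - i.+1) * x + x = d * x.
  by rewrite -mulnDl -mulSnr -addnS subnSK // subnKC // ltnW.
have : r * d <= \sum_(j < r) ((i * m j) %% d + ((d - i.+1) * m j) %% d + m j).
  rewrite -[r in r * _]card_ord -sum_nat_const.
  by apply: leq_sum => j _; rewrite dvdn_leq_modnDD ?mulD_rev ?dvdn_mulr.
rewrite !big_split /= sum_m !sum_modn_mulE -mulnDl -mulSnr leq_pmul2r //;
  last exact: leq_ltn_trans lt_i_d.
lia.
Qed.

End Lambda.

Lemma card_rev_ord_disjoint (n : nat) (A : {set 'I_n}) (i0 : 'I_n) :
  i0 \notin A -> rev_ord i0 \notin A -> i0 != rev_ord i0 ->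
  (forall i, i \in A -> rev_ord i \notin A) ->
  2 * #|A| <= n - 2.
Proof.
move=> i0A ri0A neq_i0 revA.
have disjA : A :&: @rev_ord n @: A = set0.
  apply/setP => x; rewrite !inE; apply/negP => /andP[Ax /imsetP[y Ay x_ry]].
  by move: (revA y Ay); rewrite -x_ry Ax.
have sub_compl : A :|: @rev_ord n @: A \subset ~: [set i0; rev_ord i0].
  apply/subsetP => x; rewrite !inE => /orP[Ax | /imsetP[y Ay ->]].
    by apply/negP => /orP[]/eqP x_eq; rewrite -x_eq Ax in i0A ri0A.
  apply/negP => /orP[]/eqP y_eq.
    by move: ri0A; rewrite -y_eq rev_ordK Ay.
  by move/rev_ord_inj: y_eq => y_eq; rewrite -y_eq Ay in i0A.
move: (subset_leq_card sub_compl).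
rewrite cardsU disjA cards0 subn0 card_imset; last exact: rev_ord_inj.
by rewrite [#|~: _|]cardsCs setCK cards2 neq_i0 card_ord mul2n -addnn.
Qed.

Theorem lemma4p6 (r d : nat) (m : 'I_r -> nat) :
  4 <= r ->
  0 < d ->
  (forall j, 0 < m j) ->
  \sum_(j < r) m j = d ->
  (* #{...} < (d-1)/2, stated as 2 * #{...} < d - 1 to stay in nat *)
  2 * count_lambda1 d m < d - 1.
Proof.
move=> r_ge4 d_gt0 m_gt0 sum_m.
have r_le_d : r <= d.
  by rewrite -sum_m -[r in r <= _]card_ord -sum1_card leq_sum.
have lambda_rev_ge3 i : i < d -> 3 <= lambda d m i + lambda d m (d - i.+1).
  by move=> lt_i_d; have := lambdaD_rev_ge sum_m m_gt0 lt_i_d; lia.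
suff : 2 * count_lambda1 d m <= d - 2 by lia.
rewrite /count_lambda1; apply: (card_rev_ord_disjoint (i0 := Ordinal d_gt0)).
- by rewrite inE ltnn.
- have := lambda_rev_ge3 0 d_gt0; rewrite inE lambda0 /= => ge3.
  by apply/negP => /andP[_ /eqP]; lia.
- by apply/eqP => /(congr1 val) /=; lia.
- move=> i; rewrite !inE /= => /andP[_ /eqP lam_i]; apply/negP => /andP[_ /eqP].
  by have := lambda_rev_ge3 i (ltn_ord i); lia.
Qed.
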